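(* Let $P=\{p_1,\dots,p_n\}\subset\mathbb{R}^d$ be a finite point set spanning $\mathbb{R}^d$ affinely. Let $M\colon\mathbb{R}^{dn}\to\mathbb{R}^{\binom n2}$, $(v_1,\dots,v_n)\mapsto(\langle v_i-v_j,p_i-p_j\rangle)_{i<j}$, and $\Delta\colon\mathbb{R}^{\binom n2}\to\mathbb{R}^{\mathcal C(P)}$, $(f_{ij})\mapsto\bigl(\sum_{i<j,\ i,j\in C}w^C_{ij}f_{ij}\bigr)_{C\in\mathcal C(P)}$. Then $\operatorname{Im}M\subseteq\ker\Delta$. If moreover $P$ contains $d$ affinely independent points whose affine hull contains no other point of $P$, then $\operatorname{Im}M=\ker\Delta$.
   Context: $\mathcal C(P)$ is the set of circuits of $P$, i.e. minimal affinely dependent subsets. For a circuit $C$ there is an affine dependence $\sum_{i\in C}\alpha_ip_i=0$, $\sum_{i\in C}\alpha_i=0$, unique up to scaling with all $\alpha_i\ne0$; set $w^C_{ij}=\alpha_i\alpha_j$ for $i,j\in C$ (this is, up to scaling, the unique self-stress of the complete graph on $C$, i.e. $\sum_{j\in C}w^C_{ij}(p_i-p_j)=0$ for all $i\in C$). *)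

From HB Require Import structures.
From mathcomp Require Import all_boot all_order all_algebra.
From Stdlib Require Import ClassicalEpsilon.
Set Implicit Arguments. Unset Strict Implicit. Unset Printing Implicit Defensive.
Import Order.TTheory GRing.Theory Num.Theory.
Local Open Scope ring_scope.

Section Defs.
Variables (R : realFieldType) (d n : nat).
Implicit Types (p v : 'I_n -> 'rV[R]_d) (C S : {set 'I_n}) (a : 'I_n -> R).

Definition dotv (u w : 'rV[R]_d) : R := \sum_(k < d) u 0 k * w 0 k.

Definition aff_spanning p : Prop :=
  forall x : 'rV[R]_d, exists a, \sum_i a i = 1 /\ \sum_i a i *: p i = x.

Definition is_affdep p C a : Prop :=
  [/\ forall i, i \notin C -> a i = 0, exists i, a i != 0,
      \sum_i a i = 0 & \sum_i a i *: p i = 0].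

Definition aff_dependent p C : Prop := exists a, is_affdep p C a.

Definition circuit p C : Prop :=
  aff_dependent p C /\ forall D : {set 'I_n}, D \proper C -> ~ aff_dependent p D.

(* the affine dependence alpha of a circuit (chosen; unique up to scaling) *)
Definition circ_coef p C : 'I_n -> R :=
  epsilon (inhabits (fun _ : 'I_n => 0)) (is_affdep p C).

Definition wC p C (i j : 'I_n) : R := circ_coef p C i * circ_coef p C j.

(* f in R^{n choose 2} represented by its values f i j for i < j *)
Definition in_image_M p (f : 'I_n -> 'I_n -> R) : Prop :=
  exists v, forall i j : 'I_n, (i < j)%N -> f i j = dotv (v i - v j) (p i - p j).

Definition Delta p (f : 'I_n -> 'I_n -> R) C : R :=
  \sum_(i in C) \sum_(j in C | (i < j)%N) wC p C i j * f i j.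

Definition in_ker_Delta p (f : 'I_n -> 'I_n -> R) : Prop :=
  forall C, circuit p C -> Delta p f C = 0.

Definition in_aff_hull p S (x : 'rV[R]_d) : Prop :=
  exists a, [/\ forall i, i \notin S -> a i = 0, \sum_i a i = 1
              & \sum_i a i *: p i = x].

End Defs.

(* The circuit weights w^C_ij = a_i a_j form a self-stress of the complete graph
   on C, i.e. sum_j w_ij (p_i - p_j) = 0, and pairing a self-stress with any
   velocity field v gives sum_ij w_ij <v_i - v_j, p_i - p_j> = 0: so Im M is in
   ker Delta.
   Conversely, let S be the d given points. Every point outside S completes S to
   an affine basis of R^d, so prescribed values on all pairs meeting S are
   realized as <v_i - v_j, p_i - p_j> (on S by induction, then at each outside
   point by a linear system). For i < j both outside S, p_j is an affine
   combination of S + i with a nonzero coefficient at i; the support of this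
   dependence is a circuit C through i and j inside S + i + j. All other pairs
   of C meet S, so Delta (f - M v) at C is w^C_ij (f_ij - (M v)_ij), which
   vanishes for f in ker Delta. *)


From HB Require Import structures.
From mathcomp Require Import all_boot all_order all_algebra.
From Stdlib Require Import ClassicalEpsilon.
From mathcomp Require Import ring.
Import Order.TTheory GRing.Theory Num.Theory.
Local Open Scope ring_scope.
Set Implicit Arguments. Unset Strict Implicit. Unset Printing Implicit Defensive.

Section DotProduct.
Variables (R : realFieldType) (d : nat).
Implicit Types u w : 'rV[R]_d.

Lemma dotvC u w : dotv u w = dotv w u.
Proof. by apply: eq_bigr => k _; rewrite mulrC. Qed.

Lemma dotvDr u : {morph dotv u : w1 w2 / w1 + w2}.
Proof. by move=> w1 w2; rewrite -big_split; apply: eq_bigr => k _; rewrite mxE mulrDr. Qed.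

Lemma dotvZr u a w : dotv u (a *: w) = a * dotv u w.
Proof. by rewrite mulr_sumr; apply: eq_bigr => k _; rewrite mxE mulrCA. Qed.

Lemma dotv0r u : dotv u 0 = 0.
Proof. by rewrite -(scale0r 0) dotvZr mul0r. Qed.

Lemma dotvNr u w : dotv u (- w) = - dotv u w.
Proof. by rewrite -scaleN1r dotvZr mulN1r. Qed.

Lemma dotvBl u1 u2 w : dotv (u1 - u2) w = dotv u1 w - dotv u2 w.
Proof. by rewrite dotvC dotvDr dotvNr !(dotvC w). Qed.

Lemma dotv_sumr I (r : seq I) (P : pred I) u (F : I -> 'rV[R]_d) :
  dotv u (\sum_(i <- r | P i) F i) = \sum_(i <- r | P i) dotv u (F i).
Proof. exact: (big_morph _ (dotvDr u) (dotv0r u)). Qed.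

End DotProduct.

Lemma sum_sym_upper (V : nmodType) n (h : 'I_n -> 'I_n -> V) :
  (forall i j, h i j = h j i) -> (forall i, h i i = 0) ->
  \sum_i \sum_j h i j = (\sum_(i : 'I_n) \sum_(j : 'I_n | (i < j)%N) h i j) *+ 2.
Proof.
move=> hC h0.
have split_ij (i j : 'I_n) :
    h i j = (if (i < j)%N then h i j else 0) + (if (j < i)%N then h j i else 0).
  by case: ltngtP => [||/val_inj->]; rewrite ?h0 ?addr0 ?add0r // hC.
under eq_bigr do under eq_bigr do rewrite split_ij.
under eq_bigr do rewrite big_split /=.
rewrite big_split /= [X in _ + X]exchange_big /= mulr2n.
by under [in RHS]eq_bigr do rewrite big_mkcond.
Qed.

Lemma sum_delta (K : pzRingType) n (k : 'I_n) : \sum_(i : 'I_n) (i == k)%:R = 1 :> K.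
Proof. by rewrite (bigD1 k) //= eqxx big1 ?addr0 // => i /negbTE ->. Qed.

Lemma sum_deltaZ (K : pzRingType) (V : lmodType K) n (k : 'I_n) (w : 'I_n -> V) :
  \sum_i (i == k)%:R *: w i = w k.
Proof.
by rewrite (bigD1 k) //= eqxx scale1r big1 ?addr0 // => i /negbTE ->; rewrite scale0r.
Qed.

Section EnumCoef.
Variables (K : pzRingType) (n : nat) (T : {set 'I_n}).

Definition enum_coef (x : 'I_#|T| -> K) (i : 'I_n) : K :=
  \sum_(k | enum_val k == i) x k.

Lemma enum_coef_out x i : i \notin T -> enum_coef x i = 0.
Proof.
move=> iT; apply: big1 => k /eqP ki.
by move: iT; rewrite -ki enum_valP.
Qed.

Lemma enum_coef_val x k : enum_coef x (enum_val k) = x k.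
Proof. by rewrite /enum_coef (big_pred1 k) // => k'; rewrite (inj_eq enum_val_inj). Qed.

Lemma sum_enum_coef (V : lmodType K) x (u : 'I_n -> V) :
  \sum_i enum_coef x i *: u i = \sum_k x k *: u (enum_val k).
Proof.
rewrite [RHS](partition_big (@enum_val _ (mem T)) predT) //=.
apply: eq_bigr => i _; rewrite scaler_suml.
by apply: eq_bigr => k /eqP <-.
Qed.

End EnumCoef.

Section RowsOnSet.
Variables (F : fieldType) (d n : nat) (T : {set 'I_n}) (u : 'I_n -> 'rV[F]_d).

Definition enum_mx := \matrix_(k < #|T|) u (enum_val k).

Definition lin_indep_on := forall c : 'I_n -> F,
  (forall i, i \notin T -> c i = 0) -> \sum_i c i *: u i = 0 -> forall i, c i = 0.

Lemma mul_enum_mx (x : 'rV_#|T|) : x *m enum_mx = \sum_i enum_coef (x 0) i *: u i.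
Proof. by rewrite sum_enum_coef mulmx_sum_row; under eq_bigr do rewrite rowK. Qed.

Lemma lin_indep_row_free : lin_indep_on -> row_free enum_mx.
Proof.
move=> indep; apply/inj_row_free => y y0; apply/rowP => k.
rewrite mxE -enum_coef_val; apply: indep; first exact: enum_coef_out.
by rewrite -mul_enum_mx.
Qed.

Lemma row_full_span w : row_full enum_mx ->
  exists c, (forall i, i \notin T -> c i = 0) /\ w = \sum_i c i *: u i.
Proof.
move=> full; have /submxP[x ->] := submx_full w full.
by exists (enum_coef (x 0)); split; [exact: enum_coef_out | exact: mul_enum_mx].
Qed.

End RowsOnSet.

Lemma row_free_dotv_solvable (R : realFieldType) d n (T : {set 'I_n})
    (u : 'I_n -> 'rV[R]_d) (c : 'I_n -> R) :
  row_free (enum_mx T u) -> exists x, forall i, i \in T -> dotv x (u i) = c i.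
Proof.
move=> free; have full : row_full (enum_mx T u)^T by rewrite /row_full mxrank_tr.
have /submxP[x xc] := submx_full (\row_k c (enum_val k)) full.
exists x => i iT; have := congr1 (fun M : 'rV_#|T| => M 0 (enum_rank_in iT i)) xc.
rewrite !mxE enum_rankK_in // => ->.
by apply: eq_bigr => k _; rewrite !mxE enum_rankK_in.
Qed.

Section Framework.
Variables (R : realFieldType) (d n : nat) (p : 'I_n -> 'rV[R]_d).
Implicit Types (v : 'I_n -> 'rV[R]_d) (C S T : {set 'I_n}) (f g : 'I_n -> 'I_n -> R).

(* [stretch v i j] is the (i,j) entry of [M v]. *)
Definition stretch v i j := dotv (v i - v j) (p i - p j).

Lemma stretchC v i j : stretch v i j = stretch v j i.
Proof. by rewrite /stretch -(opprB (v j)) -(opprB (p j)) dotvNr dotvC dotvNr opprK dotvC. Qed.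

Lemma stress_stretch_sum (w : 'I_n -> 'I_n -> R) v :
  (forall i j, w i j = w j i) -> (forall i, \sum_j w i j *: (p i - p j) = 0) ->
  \sum_i \sum_j w i j * stretch v i j = 0.
Proof.
move=> wC weq.
have split_ij i j : w i j * stretch v i j =
    dotv (v i) (w i j *: (p i - p j)) + dotv (v j) (w j i *: (p j - p i)).
  by rewrite /stretch dotvBl !dotvZr -(opprB (p j)) !dotvNr wC; ring.
under eq_bigr do under eq_bigr do rewrite split_ij.
under eq_bigr do rewrite big_split /=.
rewrite big_split /= [X in _ + X]exchange_big /=.
by rewrite big1 ?addr0 // => i _; rewrite -dotv_sumr weq dotv0r.
Qed.

Lemma circ_coef_affdep C : circuit p C -> is_affdep p C (circ_coef p C).
Proof. by case=> dep _; apply: epsilon_spec. Qed.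

Lemma circ_coef_neq0 C i : circuit p C -> i \in C -> circ_coef p C i != 0.
Proof.
move=> hC iC; have [out [i0 ai0] s0 sp] := circ_coef_affdep hC.
apply/negP => /eqP ai; apply: (hC.2 [set j in C | circ_coef p C j != 0]).
  apply/properP; split; first by apply/subsetP => j; rewrite inE => /andP[].
  by exists i => //; rewrite inE ai eqxx andbF.
exists (circ_coef p C); split => //; last by exists i0.
by move=> j; rewrite inE negb_and negbK => /orP[/out|/eqP].
Qed.

Lemma wC_sym C i j : wC p C i j = wC p C j i.
Proof. exact: mulrC. Qed.

Lemma wC_equilibrium C i : circuit p C -> \sum_j wC p C i j *: (p i - p j) = 0.
Proof.
move=> /circ_coef_affdep[_ _ s0 sp].
under eq_bigr do rewrite /wC -scalerA scalerBr.
by rewrite -scaler_sumr sumrB -scaler_suml s0 sp scale0r subrr scaler0.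
Qed.

Lemma Delta_circuitE C f : circuit p C ->
  Delta p f C = \sum_(i : 'I_n) \sum_(j : 'I_n | (i < j)%N) wC p C i j * f i j.
Proof.
move=> /circ_coef_affdep[out _ _ _].
have w0 i j : (i \notin C) || (j \notin C) -> wC p C i j = 0.
  by case/orP => /out; rewrite /wC => ->; rewrite ?mul0r ?mulr0.
rewrite /Delta big_mkcond; apply: eq_bigr => i _ /=; case: ifPn => iC.
  rewrite big_mkcond [RHS]big_mkcond; apply: eq_bigr => j _ /=.
  by case: (boolP (j \in C)) => jC //=; case: ifP => // _; rewrite w0 ?jC ?orbT ?mul0r.
by rewrite big1 // => j _; rewrite w0 ?iC ?mul0r.
Qed.

Lemma Delta_stretch C v : circuit p C -> Delta p (stretch v) C = 0.
Proof.
move=> hC; rewrite Delta_circuitE //.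
have := stress_stretch_sum v (wC_sym C) (fun i => wC_equilibrium i hC).
rewrite (sum_sym_upper (h := fun i j => wC p C i j * stretch v i j)).
- by move/eqP; rewrite mulrn_eq0 /= => /eqP.
- by move=> i j; rewrite wC_sym stretchC.
- by move=> i; rewrite /stretch !subrr dotv0r mulr0.
Qed.

Lemma Delta_eq_upper C f g :
  (forall i j : 'I_n, (i < j)%N -> f i j = g i j) -> Delta p f C = Delta p g C.
Proof.
by move=> fg; apply: eq_bigr => i _; apply: eq_bigr => j /andP[_ ij]; rewrite fg.
Qed.

Lemma DeltaB C f g : Delta p (fun i j => f i j - g i j) C = Delta p f C - Delta p g C.
Proof.
rewrite /Delta -sumrB; apply: eq_bigr => i _; rewrite -sumrB.
by apply: eq_bigr => j _; rewrite mulrBr.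
Qed.

Lemma image_M_sub_ker_Delta f : in_image_M p f -> in_ker_Delta p f.
Proof.
by move=> [v fv] C hC; rewrite (Delta_eq_upper C (g := stretch v) fv) Delta_stretch.
Qed.

Definition aff_indep T := forall a : 'I_n -> R,
  (forall i, i \notin T -> a i = 0) -> \sum_i a i = 0 -> \sum_i a i *: p i = 0 ->
  forall i, a i = 0.

Lemma not_aff_dependent_indep T : ~ aff_dependent p T -> aff_indep T.
Proof.
move=> nodep a out s0 sp i; apply/eqP/negPn/negP => ai; apply: nodep.
by exists a; split => //; exists i.
Qed.

Lemma aff_indep_subset S T : S \subset T -> aff_indep T -> aff_indep S.
Proof.
by move=> /subsetP ST indT a out; apply: indT => i iT; apply: out; exact: contra (ST i) iT.
Qed.

Lemma aff_indep_setU1 T k :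
  aff_indep T -> ~ in_aff_hull p T (p k) -> aff_indep (k |: T).
Proof.
move=> indT notin a out s0 sp.
have [ak0|akn0] := eqVneq (a k) 0.
  apply: indT => // i iT; have [->//|ik] := eqVneq i k.
  by apply: out; rewrite in_setU1 negb_or ik iT.
case: notin; exists (fun i => (i == k)%:R - a i / a k); split.
- move=> i iT /=; have [->|ik] := eqVneq i k; first by rewrite divff // subrr.
  by rewrite out ?in_setU1 ?negb_or ?ik // mul0r subrr.
- by rewrite sumrB sum_delta -mulr_suml s0 mul0r subr0.
- under eq_bigr do rewrite scalerBl (mulrC (a _)) -scalerA.
  by rewrite sumrB sum_deltaZ -scaler_sumr sp scaler0 subr0.
Qed.

Lemma aff_indep_lin_indep_diffs T k : k \notin T -> aff_indep (k |: T) ->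
  lin_indep_on T (fun b => p k - p b).
Proof.
move=> kT indT c out sc0.
have a0 : forall i, (i == k)%:R * \sum_j c j - c i = 0.
  apply: indT.
  - by move=> i; rewrite in_setU1 negb_or => /andP[/negbTE -> iT]; rewrite out // mul0r subrr.
  - by rewrite sumrB -mulr_suml sum_delta mul1r subrr.
  - rewrite -[RHS]sc0; under eq_bigr do rewrite scalerBl -scalerA.
    rewrite sumrB sum_deltaZ scaler_suml -sumrB.
    by apply: eq_bigr => i _; rewrite scalerBr.
move=> i; have [->|ik] := eqVneq i k; first exact: out.
by have := a0 i; rewrite (negbTE ik) mul0r sub0r => /eqP; rewrite oppr_eq0 => /eqP.
Qed.

Lemma aff_hull_full T k x : k \notin T -> #|T| = d -> aff_indep (k |: T) ->
  in_aff_hull p (k |: T) x.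
Proof.
move=> kT cardT indT.
have free := lin_indep_row_free (aff_indep_lin_indep_diffs kT indT).
have full : row_full (enum_mx T (fun b => p k - p b)) by rewrite /row_full (eqP free) cardT.
have [c [out pkx]] := row_full_span (p k - x) full.
exists (fun i => (i == k)%:R * (1 - \sum_j c j) + c i); split.
- by move=> i; rewrite in_setU1 negb_or => /andP[/negbTE -> iT]; rewrite out // mul0r addr0.
- by rewrite big_split /= -mulr_suml sum_delta mul1r subrK.
- under eq_bigr do rewrite scalerDl -scalerA.
  rewrite big_split sum_deltaZ /=.
  have -> : \sum_i c i *: p i = (\sum_i c i) *: p k - (p k - x).
    rewrite pkx; under [X in _ - X]eq_bigr do rewrite scalerBr.
    by rewrite sumrB -scaler_suml opprB addrC subrK.
  by rewrite scalerBl scale1r addrA subrK opprB addrC subrK.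
Qed.

Lemma circuit_support T l (mu : 'I_n -> R) : aff_indep T ->
  (forall i, i \notin l |: T -> mu i = 0) -> \sum_i mu i = 0 -> \sum_i mu i *: p i = 0 ->
  mu l != 0 -> circuit p [set i | mu i != 0].
Proof.
move=> indT out s0 sp ml; split.
  by exists mu; split => //; [move=> i; rewrite inE negbK => /eqP | exists l].
(* A dependence nu on a smaller support would make nu l * mu - mu l * nu a
   dependence on T that does not vanish at a point of C outside D. *)
move=> D /properP[/subsetP DC [x xC xD]] [nu [nout [i0 ni0] ns0 nsp]].
have nu_out i : i \notin l |: T -> nu i = 0.
  by move=> /out mi; apply: nout; apply/negP => /DC; rewrite inE mi eqxx.
have comb i : nu l * mu i - mu l * nu i = 0.
  apply: (indT (fun i => nu l * mu i - mu l * nu i)) => [j jT /=||].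
  - have [->|jl] := eqVneq j l; first by rewrite mulrC subrr.
    have jlT : j \notin l |: T by rewrite in_setU1 negb_or jl.
    by rewrite (out j) // (nu_out j) // !mulr0 subrr.
  - by rewrite sumrB -!mulr_sumr s0 ns0 !mulr0 subrr.
  - under eq_bigr do rewrite scalerBl -!scalerA.
    by rewrite sumrB -!scaler_sumr sp nsp !scaler0 subrr.
have nl0 : nu l = 0.
  move: xC (comb x); rewrite inE (nout x xD) mulr0 subr0 => mx /eqP.
  by rewrite mulf_eq0 (negbTE mx) orbF => /eqP.
move: ni0; rewrite (indT nu) ?eqxx // => j jT.
by have [->//|jl] := eqVneq j l; apply: nu_out; rewrite in_setU1 negb_or jl.
Qed.

Lemma circuit_through_pair S i j : #|S| = d -> i \notin S -> j \notin S -> i != j ->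
  aff_indep (i |: S) -> aff_indep (j |: S) ->
  exists C, [/\ circuit p C, i \in C, j \in C & C \subset j |: (i |: S)].
Proof.
move=> cardS iS jS ij indi indj.
have [a [aout a1 ap]] := aff_hull_full (p j) iS cardS indi.
pose mu t := a t - (t == j)%:R.
have mu_out t : t \notin j |: (i |: S) -> mu t = 0.
  by rewrite in_setU1 negb_or => /andP[/negbTE tj /aout]; rewrite /mu tj => ->; rewrite subrr.
have mu_s0 : \sum_t mu t = 0 by rewrite sumrB a1 sum_delta subrr.
have mu_sp : \sum_t mu t *: p t = 0.
  by under eq_bigr do rewrite scalerBl; rewrite sumrB ap sum_deltaZ subrr.
have mu_j : mu j = -1.
  by rewrite /mu aout ?eqxx ?sub0r // in_setU1 negb_or eq_sym ij jS.
have mu_j0 : mu j != 0 by rewrite mu_j oppr_eq0 oner_eq0.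
exists [set t | mu t != 0]; split.
- exact: circuit_support indi mu_out mu_s0 mu_sp mu_j0.
- rewrite inE; apply: contraNneq mu_j0 => mi0; apply/eqP.
  apply: (indj mu _ mu_s0 mu_sp j) => t; rewrite in_setU1 negb_or => /andP[tj tS].
  have [->//|ti] := eqVneq t i; apply: mu_out.
  by rewrite !in_setU1 (negbTE tj) (negbTE ti) (negbTE tS).
- by rewrite inE.
- by apply/subsetP => t; rewrite inE; apply: contraR => /mu_out ->; rewrite eqxx.
Qed.

Lemma Delta_only_pair C g k l : k \in C -> l \in C -> (k < l)%N ->
  (forall i j, i \in C -> j \in C -> (i < j)%N -> (i != k) || (j != l) -> g i j = 0) ->
  Delta p g C = wC p C k l * g k l.
Proof.
move=> kC lC kl g0; rewrite /Delta (bigD1 k) //= [X in _ + X]big1 ?addr0; last first.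
  move=> i /andP[iC ik]; apply: big1 => j /andP[jC ij].
  by rewrite g0 ?mulr0 // ik.
rewrite (bigD1 l) /= ?lC ?kl // big1 ?addr0 // => j /andP[/andP[jC kj] jl].
by rewrite g0 ?mulr0 // jl orbT.
Qed.

Lemma extend_stretch T k v (F : 'I_n -> R) : k \notin T -> aff_indep (k |: T) ->
  exists x, forall b, b \in T -> dotv (x - v b) (p k - p b) = F b.
Proof.
move=> kT indT.
have free := lin_indep_row_free (aff_indep_lin_indep_diffs kT indT).
have [x xF] := row_free_dotv_solvable (fun b => F b + dotv (v b) (p k - p b)) free.
by exists x => b bT; rewrite dotvBl xF // addrK.
Qed.

Lemma aff_indep_realize T (F : 'I_n -> 'I_n -> R) :
  (forall i j, F i j = F j i) -> aff_indep T ->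
  exists v, forall i j, i \in T -> j \in T -> i != j -> stretch v i j = F i j.
Proof.
move=> FC; have [m] := ubnP #|T|; elim: m T => // m IH T cardT indT.
have [T0|[t tT]] := set_0Vmem T; first by exists (fun=> 0) => i; rewrite T0 inE.
have tT' : t \notin T :\ t by rewrite setD11.
have cardT' : (#|T :\ t| < m)%N by move: cardT; rewrite (cardsD1 t) tT add1n ltnS.
have [v vF] := IH _ cardT' (aff_indep_subset (subsetDl T [set t]) indT).
have indT' : aff_indep (t |: (T :\ t)) by rewrite setD1K.
have [x xF] := extend_stretch v (F t) tT' indT'.
exists (fun i => if i == t then x else v i) => i j iT jT ij.
have [it|it] := eqVneq i t; have [jt|jt] := eqVneq j t.
- by move: ij; rewrite it jt eqxx.
- by rewrite /stretch it eqxx (negbTE jt) xF // in_setD1 jt jT.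
- by rewrite stretchC FC /stretch jt eqxx (negbTE it) xF // in_setD1 it iT.
- by rewrite /stretch (negbTE it) (negbTE jt); apply: vF; rewrite // in_setD1 ?it ?jt.
Qed.

Lemma star_realize S (F : 'I_n -> 'I_n -> R) :
  (forall i j, F i j = F j i) -> aff_indep S -> (forall k, k \notin S -> aff_indep (k |: S)) ->
  exists V, forall i j, i != j -> (i \in S) || (j \in S) -> stretch V i j = F i j.
Proof.
move=> FC indS indk; have [v vF] := aff_indep_realize FC indS.
have ex_x k : exists x : 'rV[R]_d,
    k \notin S -> forall b, b \in S -> dotv (x - v b) (p k - p b) = F k b.
  have [kS|kS] := boolP (k \in S); first by exists 0.
  by have [x xF] := extend_stretch v (F k) kS (indk k kS); exists x.
have [x xF] := fin_all_exists ex_x.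
exists (fun i => if i \in S then v i else x i) => i j ij.
have [iS|iS] := boolP (i \in S); have [jS|jS] := boolP (j \in S) => //= _.
- by rewrite /stretch iS jS; apply: vF.
- by rewrite stretchC FC /stretch iS (negbTE jS) xF.
- by rewrite /stretch (negbTE iS) jS xF.
Qed.

Lemma ker_Delta_sub_image_M S f : #|S| = d -> aff_indep S ->
  (forall k, k \notin S -> aff_indep (k |: S)) -> in_ker_Delta p f -> in_image_M p f.
Proof.
move=> cardS indS indk ker.
pose F (i j : 'I_n) := if (i < j)%N then f i j else f j i.
have FC i j : F i j = F j i by rewrite /F; case: ltngtP => // /val_inj ->.
have [V VF] := star_realize FC indS indk.
have VF_meet (a b : 'I_n) : (a < b)%N -> (a \in S) || (b \in S) -> f a b = stretch V a b.
  by move=> ab meet; rewrite VF ?neq_ltn ?ab // /F ab.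
exists V => i j ij; have [meet|] := boolP ((i \in S) || (j \in S)); first exact: VF_meet.
rewrite negb_or => /andP[iS jS].
have [C [hC iC jC CS]] :=
  circuit_through_pair cardS iS jS (negbT (ltn_eqF ij)) (indk i iS) (indk j jS).
have in_ij t : t \in C -> t \notin S -> (t == i) || (t == j).
  by move=> /(subsetP CS) + tS; rewrite !in_setU1 (negbTE tS) orbF orbC.
have : Delta p (fun a b => f a b - stretch V a b) C = wC p C i j * (f i j - stretch V i j).
  apply: Delta_only_pair => // a b aC bC ab.
  have [meet _|] := boolP ((a \in S) || (b \in S)); first by rewrite VF_meet ?subrr.
  rewrite negb_or => /andP[aS bS]; move: ab.
  move: (in_ij a aC aS) (in_ij b bC bS) => /orP[]/eqP-> /orP[]/eqP->;
    by rewrite ?ltnn ?eqxx // ltnNge ltnW.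
rewrite DeltaB ker // Delta_stretch // subrr => /esym/eqP.
have wij : wC p C i j != 0 by rewrite mulf_neq0 ?circ_coef_neq0.
by rewrite mulf_eq0 (negbTE wij) subr_eq0 => /eqP.
Qed.

End Framework.

Theorem proposition6p1 (R : realFieldType) (d n : nat)
    (p : 'I_n -> 'rV[R]_d) (p_inj : injective p)
    (hspan : aff_spanning p) :
  (forall f : 'I_n -> 'I_n -> R, in_image_M p f -> in_ker_Delta p f) /\
  ((exists S : {set 'I_n}, [/\ #|S| = d, ~ aff_dependent p S &
        forall k, k \notin S -> ~ in_aff_hull p S (p k)]) ->
   forall f : 'I_n -> 'I_n -> R, in_ker_Delta p f -> in_image_M p f).
Proof.
split; first exact: image_M_sub_ker_Delta.
move=> [S [cardS depS outS]] f; have indS := not_aff_dependent_indep depS.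
apply: (ker_Delta_sub_image_M cardS indS) => k kS.
exact: aff_indep_setU1 indS (outS k kS).
Qed.
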